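(* Let $k$ be a positive integer and let $\kappa$ be an infinite cardinal. Then there is an infinite cardinal $\lambda$ such that whenever $\mathbb{Q}^\lambda$ is $k$-coloured, there is a subset $X\subset\mathbb{Q}^\lambda$ with $|X|=\kappa$ and $X+X=\{x+y:x,y\in X\}$ monochromatic.
   Context: For a cardinal $\lambda$, $\mathbb{Q}^\lambda$ denotes the rational vector space of dimension $\lambda$ (the direct sum of $\lambda$ copies of $\mathbb{Q}$). A $k$-colouring is an arbitrary function to a set of $k$ colours. *)

(* rationals from mathcomp, cardinals modelled by types. *)
From Stdlib Require Import List.
From HB Require Import structures.
From mathcomp Require Import all_boot all_order all_algebra.
Set Implicit Arguments. Unset Strict Implicit. Unset Printing Implicit Defensive.
Import Order.TTheory GRing.Theory Num.Theory.
Local Open Scope ring_scope.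

Definition infinite_type (T : Type) : Prop :=
  exists f : nat -> T, forall m n, f m = f n -> m = n.

(* Q^L : finitely supported functions L -> rat (direct sum of L copies of Q). *)
Definition fin_supp (L : Type) (v : L -> rat) : Prop :=
  exists s : list L, forall l, v l != 0 -> In l s.

Definition vadd (L : Type) (u v : L -> rat) : L -> rat := fun l => u l + v l.

Definition has_card (L K : Type) (X : (L -> rat) -> Prop) : Prop :=
  exists f : K -> (L -> rat),
    (forall a b, f a = f b -> a = b) /\
    (forall a, X (f a)) /\
    (forall x, X x -> exists a, f a = x).

(* Well-order K. A Ramsey theorem for well-ordered index sets gives a well-ordered L such
   that every colouring of the increasing 4k-lists of L is constant on the increasing
   4k-lists of an order-embedded copy of W = omega + K*omega + omega; it is proved by the
   Erdős–Rado tree argument, the tree living on a power set so that, by Cantor's theorem,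
   it must have long branches.
   Colour an increasing 4k-list of L by the colour of the vector equal to 2 on its first
   p and to 4 on its next q entries: on the copy of W this colour is some c0 p q.
   For a in K let x_a be 1 on s0 head coordinates, 2 on t coordinates of the a-th middle
   block and 2 on s1 tail coordinates. Then x_a + x_a has pattern (s0, t + s1) and, for
   a <> b, x_a + x_b has pattern (s0 + 2t, s1). By pigeonhole, c0 (2k-2x) (2k+x) takes
   the same value at some x = i and x = j with i < j <= k; then s0 = 2k-2j, t = j-i,
   s1 = 2k+i give both patterns that colour, so {x_a | a in K} has monochromatic sumset
   (the patterns are padded with tail coordinates to length 4k). *)

From HB Require Import structures.
From mathcomp Require Import all_boot all_order all_algebra.
From mathcomp Require Import boolp wochoice zify.
From Stdlib Require Import Lia Classical ClassicalEpsilon.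

Set Implicit Arguments. Unset Strict Implicit. Unset Printing Implicit Defensive.
Import GRing.Theory.

Open Scope list_scope.
Bind Scope list_scope with list.

(** * Well orders and increasing lists *)

Record strict_well_order {T : Type} (lt : T -> T -> Prop) : Prop := {
  wo_irrefl : forall x, ~ lt x x;
  wo_trans : forall x y z, lt x y -> lt y z -> lt x z;
  wo_trichotomy : forall x y, lt x y \/ x = y \/ lt y x;
  wo_wf : well_founded lt }.

Fixpoint increasing {T : Type} (lt : T -> T -> Prop) (s : list T) : Prop :=
  if s is x :: s' then (forall y, List.In y s' -> lt x y) /\ increasing lt s' else True.

Definition strict_mono {A B : Type} (ltA : A -> A -> Prop) (ltB : B -> B -> Prop) (e : A -> B) :=
  forall x y, ltA x y -> ltB (e x) (e y).

Section Increasing.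
Variables (T : Type) (lt : T -> T -> Prop).

Lemma increasing_app s1 s2 : increasing lt (s1 ++ s2) <->
  [/\ increasing lt s1, increasing lt s2 &
      forall x y, List.In x s1 -> List.In y s2 -> lt x y].
Proof.
elim: s1 => [|x s1 IH] /=; first by split=> [|[]].
rewrite IH; split.
- move=> [ltx [inc1 inc2 cross]]; split=> //.
  + by split=> // y y1; apply: ltx; apply: List.in_or_app; left.
  + by move=> x' y [<-|x'1] y2; [apply: ltx; apply: List.in_or_app; right|apply: cross].
- move=> [/= [ltx inc1] inc2 cross]; split; last by split=> // x' y x'1 y2; apply: cross y2; right.
  by move=> y; rewrite List.in_app_iff => -[y1|y2]; [exact: ltx|apply: cross y2; left].
Qed.

Lemma increasing_map (U : Type) (ltU : U -> U -> Prop) (h : U -> T) s :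
  strict_mono ltU lt h -> increasing ltU s -> increasing lt (List.map h s).
Proof.
move=> h_mono; elim: s => [|x s IH] //= [ltx inc]; split; last exact: IH.
by move=> _ /List.in_map_iff[y [<- ys]]; apply: h_mono; apply: ltx.
Qed.

End Increasing.

Lemma list_preimage (A B : Type) (r : A -> B) (t : list B) :
  (forall x, List.In x t -> exists y, r y = x) -> exists u, List.map r u = t.
Proof.
elim: t => [|x t IH] cover; first by exists nil.
have [y <-] := cover x (or_introl erefl).
have [|u <-] := IH; first by move=> z zt; apply: cover; right.
by exists (y :: u).
Qed.

Lemma firstn_length_app (T : Type) (s s' : list T) : List.firstn (length s) (s ++ s') = s.
Proof. by elim: s => //= x s ->. Qed.

Lemma skipn_length_app (T : Type) (s s' : list T) : List.skipn (length s) (s ++ s') = s'.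
Proof. by elim: s. Qed.

Lemma increasing_seq start len : increasing (fun m n : nat => (m < n)%coq_nat) (List.seq start len).
Proof.
elim: len start => [|len IH] start //=; split=> // y /List.in_seq; lia.
Qed.

Lemma wf_minimal {T : Type} (lt : T -> T -> Prop) (P : T -> Prop) :
  well_founded lt -> (exists x, P x) -> exists x, P x /\ forall y, P y -> ~ lt y x.
Proof.
move=> wf_lt [x Px]; apply: NNPP => no_min.
suff noP : forall z, ~ P z by exact: noP Px.
move=> z; elim/(well_founded_ind wf_lt): z => z IH Pz.
by apply: no_min; exists z; split=> // y Py /IH.
Qed.

Lemma strict_mono_inj (T U : Type) (lt : T -> T -> Prop) (ltU : U -> U -> Prop) (e : T -> U) :
  strict_well_order lt -> strict_well_order ltU -> strict_mono lt ltU e ->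
  forall x y, e x = e y -> x = y.
Proof.
move=> lt_wo ltU_wo e_mono x y exy.
have [/e_mono|[//|/e_mono]] := wo_trichotomy lt_wo x y;
  by rewrite exy => /(wo_irrefl ltU_wo).
Qed.

Lemma well_order_exists (T : Type) : exists lt : T -> T -> Prop, strict_well_order lt.
Proof.
pose T' : eqType := HB.pack T (gen_eqMixin T).
have [R R_wo] := @well_ordering_principle T'.
have R_chain : wo_chain R predT by move=> A _; apply: R_wo.
have R_refl x : R x x by apply: (wo_chain_reflexive R_chain).
have R_total x y : R x y || R y x by apply: (wo_chainW R_chain).
have R_anti x y : R x y && R y x -> x = y by apply: (wo_chain_antisymmetric R_chain).
have R_min (A : T' -> Prop) x : A x -> exists z, A z /\ forall y, A y -> R z y.
  move=> Ax; have [z [[/asboolP Az z_low] _]] :=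
    R_wo [pred y | `[< A y >]] (ex_intro _ x (asboolT Ax)).
  by exists z; split=> // y Ay; apply: z_low; apply: asboolT.
exists (fun x y : T => ~~ R y x); split.
- by move=> x; rewrite R_refl.
- move=> x y z /negP nRyx /negP nRzy; apply/negP => Rzx.
  have [w [w3 w_low]] := R_min (fun w => w = x \/ w = y \/ w = z) x (or_introl erefl).
  case: w3 => [|[|]] ew; subst w.
  + have exz : x = z by apply: R_anti => //; rewrite Rzx w_low //; right; right.
    by subst z; case/orP: (R_total x y) => [/nRzy|/nRyx].
  + by apply: nRyx; apply: w_low; left.
  + by apply: nRzy; apply: w_low; right; left.
- move=> x y; case: (classic (x = y)) => [->|nexy]; first by right; left.
  case Ryx: (R y x); last by left.
  case Rxy: (R x y); last by right; right.
  by case: nexy; apply: R_anti => //; rewrite Rxy Ryx.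
- move=> x; apply: NNPP => x_nacc.
  have [z [z_nacc z_low]] := R_min (fun w => ~ Acc (fun x y : T => ~~ R y x) w) x x_nacc.
  by apply: z_nacc; constructor => y /negP nRzy; apply: NNPP => y_nacc; apply: nRzy; apply: z_low.
Qed.

Definition sum_lt (A B : Type) (ltA : A -> A -> Prop) (ltB : B -> B -> Prop) (x y : A + B) : Prop :=
  match x, y with
  | inl a, inl a' => ltA a a'
  | inl _, inr _ => True
  | inr _, inl _ => False
  | inr b, inr b' => ltB b b'
  end.

Definition lex_lt (A : Type) (ltA : A -> A -> Prop) (x y : A * nat) : Prop :=
  ltA x.1 y.1 \/ x.1 = y.1 /\ (x.2 < y.2)%coq_nat.

Lemma nat_well_order : strict_well_order (fun m n : nat => (m < n)%coq_nat).
Proof. by split=> *; [lia|lia|lia|exact: Wf_nat.lt_wf]. Qed.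

Lemma sum_well_order (A B : Type) (ltA : A -> A -> Prop) (ltB : B -> B -> Prop) :
  strict_well_order ltA -> strict_well_order ltB -> strict_well_order (sum_lt ltA ltB).
Proof.
move=> ltA_wo ltB_wo; split.
- by case=> x /=; [apply: (wo_irrefl ltA_wo)|apply: (wo_irrefl ltB_wo)].
- by case=> x [] y [] z //=; [apply: (wo_trans ltA_wo)|apply: (wo_trans ltB_wo)].
- case=> x [] y /=.
  + by have [|[->|]] := wo_trichotomy ltA_wo x y; [left|right; left|right; right].
  + by left.
  + by right; right.
  + by have [|[->|]] := wo_trichotomy ltB_wo x y; [left|right; left|right; right].
- have acc_inl a : Acc (sum_lt ltA ltB) (inl a).
    elim/(well_founded_ind (wo_wf ltA_wo)): a => a IH.
    by constructor=> -[a' /IH|b' []].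
  case=> [//|b]; elim/(well_founded_ind (wo_wf ltB_wo)): b => b IH.
  by constructor=> -[a' _|b' /IH].
Qed.

Lemma lex_well_order (A : Type) (ltA : A -> A -> Prop) :
  strict_well_order ltA -> strict_well_order (lex_lt ltA).
Proof.
move=> ltA_wo; split.
- by move=> [a m] [/(wo_irrefl ltA_wo)|[_ /=]]; lia.
- move=> [a m] [b m'] [c m''] [/= ab|[/= <- lt_mm']] [/= bc|[/= <- lt_m'm'']].
  + by left; apply: (wo_trans ltA_wo) ab bc.
  + by left.
  + by left.
  + by right; split=> //=; lia.
- move=> [a m] [b m']; rewrite /lex_lt /=.
  have [ab|[<-|ba]] := wo_trichotomy ltA_wo a b; [by left; left|idtac|by right; right; left].
  have [lt_mm'|[<-|lt_m'm]] : (m < m')%coq_nat \/ m = m' \/ (m' < m)%coq_nat by lia.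
  + by left; right.
  + by right; left.
  + by right; right; right.
- move=> [a m]; elim/(well_founded_ind (wo_wf ltA_wo)): a m => a IH m.
  elim/(well_founded_ind Wf_nat.lt_wf): m => m IHm.
  by constructor=> -[b m'] [/IH //|[/= -> /IHm]].
Qed.

(** * A Ramsey theorem for well-ordered index sets *)

Section ErdosRadoTree.
Variables (n : nat) (L : Type) (lt : L -> L -> Prop) (lt_wo : strict_well_order lt).
Variables (C : Type) (f : list L -> C).

Definition agree_on (P : L -> Prop) (b b' : L) : Prop :=
  forall t, length t = n -> increasing lt t -> (forall g, List.In g t -> P g) ->
    f (t ++ [:: b]) = f (t ++ [:: b']).

Lemma agree_onW (P Q : L -> Prop) b b' :
  (forall g, P g -> Q g) -> agree_on Q b b' -> agree_on P b b'.
Proof. by move=> PQ agreeQ t tn t_inc tP; apply: agreeQ => // g /tP /PQ. Qed.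

Lemma agree_on_sym P b b' : agree_on P b b' -> agree_on P b' b.
Proof. by move=> agreeP t tn t_inc tP; rewrite agreeP. Qed.

Lemma agree_on_trans P b b' b'' : agree_on P b b' -> agree_on P b' b'' -> agree_on P b b''.
Proof. by move=> agree1 agree2 t tn t_inc tP; rewrite agree1 ?agree2. Qed.

(* [ancestor a b]: [b] lies strictly below [a] in the canonical (Erdős–Rado) tree of [f]. *)
Definition ancestor_rec (a b : L) (rec : forall g, lt g b -> Prop) : Prop :=
  lt b a /\ agree_on (fun g => exists lt_gb : lt g b, rec g lt_gb) b a.

Definition ancestor (a : L) : L -> Prop := Fix (wo_wf lt_wo) (fun _ => Prop) (ancestor_rec a).

Lemma ancestorE a b :
  ancestor a b <-> lt b a /\ agree_on (fun g => lt g b /\ ancestor a g) b a.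
Proof.
rewrite /ancestor Fix_eq; last first.
  move=> x r1 r2 r12; congr ancestor_rec.
  by apply: functional_extensionality_dep => y; apply/funext/r12.
rewrite /ancestor_rec; split=> -[lt_ba agree_ba]; split=> //.
- by apply: agree_onW agree_ba => g [lt_gb ag]; exists lt_gb.
- by apply: agree_onW agree_ba => g [lt_gb ag]; split.
Qed.

Lemma ancestor_lt a b : ancestor a b -> lt b a.
Proof. by case/ancestorE. Qed.

Lemma ancestor_of_ancestor a b g :
  ancestor a b -> (ancestor b g <-> ancestor a g /\ lt g b).
Proof.
move=> /[dup] /ancestorE [lt_ba agree_ba] anc_ab.
elim/(well_founded_ind (wo_wf lt_wo)): g => g IH.
have IH' d : lt d g -> lt g b -> (ancestor b d <-> ancestor a d).
  by move=> lt_dg lt_gb; rewrite IH //; split=> [[]|] // ad; split=> //; apply: wo_trans lt_gb.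
split.
- move=> /ancestorE [lt_gb agree_gb]; split=> //.
  apply/ancestorE; split; first exact: wo_trans lt_ba.
  apply: (@agree_on_trans _ _ b).
    by apply: agree_onW agree_gb => d [lt_dg ad]; split=> //; apply/IH'.
  by apply: agree_onW agree_ba => d [lt_dg ad]; split=> //; apply: wo_trans lt_gb.
- move=> [/ancestorE [lt_ga agree_ga] lt_gb]; apply/ancestorE; split=> //.
  have sub d : lt d g /\ ancestor b d -> lt d g /\ ancestor a d.
    by move=> [lt_dg bd]; split=> //; apply/(IH' d).
  apply: agree_on_trans (agree_onW sub agree_ga) (agree_on_sym _).
  by apply: agree_onW agree_ba => d [lt_dg bd]; split; [apply: wo_trans lt_gb|apply/(IH' d)].
Qed.

Lemma ancestor_inj a a' :
  (forall g, ancestor a g <-> ancestor a' g) -> agree_on (ancestor a) a a' -> a = a'.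
Proof.
move=> same_anc agree_aa'.
have [lt_aa'|[//|lt_a'a]] := wo_trichotomy lt_wo a a'; exfalso.
- have anc : ancestor a' a.
    by apply/ancestorE; split=> //; apply: agree_onW agree_aa' => g [_ /same_anc].
  by move/same_anc: anc => /ancestor_lt /(wo_irrefl lt_wo).
- have anc : ancestor a a'.
    apply/ancestorE; split=> //; apply: agree_on_sym.
    by apply: agree_onW agree_aa' => g [].
  by move/same_anc: anc => /ancestor_lt /(wo_irrefl lt_wo).
Qed.

Section BranchOrCover.
Variables (M : Type) (ltM : M -> M -> Prop) (ltM_wo : strict_well_order ltM) (a : L).

Definition branch_rec (m : M) (rec : forall m', ltM m' m -> L) : L :=
  let cand x := ancestor a x /\ forall m' (lt_m'm : ltM m' m), lt (rec m' lt_m'm) x in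
  epsilon (inhabits a) (fun x => cand x /\ forall y, cand y -> ~ lt y x).

Definition branch : M -> L := Fix (wo_wf ltM_wo) (fun _ => L) branch_rec.

Definition branch_cand (m : M) (x : L) : Prop :=
  ancestor a x /\ forall m', ltM m' m -> lt (branch m') x.

Lemma branch_spec m : (exists x, branch_cand m x) ->
  branch_cand m (branch m) /\ forall y, branch_cand m y -> ~ lt y (branch m).
Proof.
move=> /(wf_minimal (wo_wf lt_wo)) cand_min.
have -> : branch m = epsilon (inhabits a)
    (fun x => branch_cand m x /\ forall y, branch_cand m y -> ~ lt y x).
  rewrite /branch Fix_eq //.
  move=> x r1 r2 r12; congr branch_rec.
  by apply: functional_extensionality_dep => y; apply/funext/r12.
exact: (epsilon_spec (inhabits a) _ cand_min).
Qed.

Lemma branch_or_cover :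
  (exists e : M -> L, strict_mono ltM lt e /\ forall m, ancestor a (e m)) \/
  (exists r : M -> L, forall b, ancestor a b -> exists m, r m = b).
Proof.
have [all_cand|] := classic (forall m, exists x, branch_cand m x).
  left; exists branch; split=> [m' m lt_m'm|m].
    by have [[_ above] _] := branch_spec (all_cand m); apply: above.
  by have [[] ] := branch_spec (all_cand m).
move=> /not_all_ex_not /(wf_minimal (wo_wf ltM_wo)) [m0 [no_cand0 m0_min]].
right; exists branch => b ab.
have [m1 [[lt_m1m0 not_below] m1_min]] : exists m1, (ltM m1 m0 /\ ~ lt (branch m1) b) /\
    forall m, ltM m m0 /\ ~ lt (branch m) b -> ~ ltM m m1.
  apply: (wf_minimal (wo_wf ltM_wo)); apply: NNPP => all_below; apply: no_cand0.
  exists b; split=> // m lt_mm0; apply: NNPP => not_below.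
  by apply: all_below; exists m.
have cand1 : branch_cand m1 b.
  split=> // m lt_mm1; apply: NNPP => not_below_m.
  by apply: (m1_min m) => //; split=> //; apply: wo_trans lt_mm1 lt_m1m0.
have [_ b_min] := branch_spec (ex_intro _ b cand1).
exists m1; have [|[|]] := wo_trichotomy lt_wo (branch m1) b => //.
by move=> /(b_min _ cand1).
Qed.

End BranchOrCover.

Section Coding.
Variables (M : Type) (cover : L -> M -> L).
Hypothesis cover_onto : forall a b, ancestor a b -> exists m, cover a m = b.

Definition node (a : L) (o : option M) : L := if o is Some m then cover a m else a.

(* A node is determined by the order type and the colouring of its covered ancestors. *)
Definition code (a : L) : (M -> Prop) * (M -> M -> Prop) * (list (option M) -> C) :=
  (fun m => ancestor a (cover a m), fun m m' => lt (cover a m) (cover a m'),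
   fun u => f (List.map (node a) u)).

Section SameCode.
Variables (a a' : L).
Hypothesis same_code : code a = code a'.

Let ancestor_cover m : ancestor a (cover a m) <-> ancestor a' (cover a' m).
Proof. by have /(congr1 (fun p => p.1.1 m)) /= -> := same_code. Qed.

Let lt_cover m m' : lt (cover a m) (cover a m') <-> lt (cover a' m) (cover a' m').
Proof. by have /(congr1 (fun p => p.1.2 m m')) /= -> := same_code. Qed.

Let colour_node u : f (List.map (node a) u) = f (List.map (node a') u).
Proof. exact: (congr1 (fun p => p.2 u) same_code). Qed.

(* Corresponding nodes [b], [b'] of the trees below [a] and [a'] coincide as soon as the
   covered ancestors below them do. *)
Let node_eq b b' o :
  node a o = b -> node a' o = b' ->
  (forall g, ancestor b g <-> ancestor a g /\ lt g b) ->
  (forall g, ancestor b' g <-> ancestor a' g /\ lt g b') ->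
  (forall m, ancestor a (cover a m) -> lt (cover a m) b -> lt (cover a' m) b') ->
  (forall m, ancestor a' (cover a' m) -> lt (cover a' m) b' -> lt (cover a m) b) ->
  (forall m, ancestor a (cover a m) -> lt (cover a m) b -> cover a' m = cover a m) ->
  b = b'.
Proof.
move=> node_b node_b' anc_b anc_b' lt_to lt_from cover_eq.
apply: ancestor_inj => [g|t tn t_inc t_anc].
  rewrite anc_b anc_b'; split=> [[ag lt_gb]|[a'g lt_gb']].
    have [mg cover_mg] := cover_onto ag; rewrite -cover_mg in ag lt_gb *.
    by rewrite -cover_eq //; split; [apply/ancestor_cover|apply: lt_to].
  have [mg cover_mg] := cover_onto a'g; rewrite -cover_mg in a'g lt_gb' *.
  have ag : ancestor a (cover a mg) by apply/ancestor_cover.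
  have lt_b : lt (cover a mg) b by apply: lt_from.
  by rewrite cover_eq.
have [u t_cover] : exists u, List.map (cover a) u = t.
  apply: list_preimage => x /t_anc /anc_b [ax _]; exact: cover_onto.
have t_cover' : List.map (cover a') u = t.
  rewrite -t_cover; apply: List.map_ext_in => m mu.
  have /t_anc /anc_b [] : List.In (cover a m) t by rewrite -t_cover; apply: List.in_map.
  exact: cover_eq.
have node_map x (v : list M) o' :
    List.map (node x) (List.map Some v ++ [:: o']) = List.map (cover x) v ++ [:: node x o'].
  by rewrite List.map_app List.map_map.
by rewrite -node_b -node_b' -[in LHS]t_cover -t_cover' -!node_map colour_node.
Qed.

Let cover_same_code b : ancestor a b -> forall m, cover a m = b -> cover a' m = b.
Proof.
elim/(well_founded_ind (wo_wf lt_wo)): b => b IH ab m cover_m.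
have a'b' : ancestor a' (cover a' m) by apply/ancestor_cover; rewrite cover_m.
symmetry; apply: (node_eq (o := Some m)) => //.
- by move=> g; apply: ancestor_of_ancestor.
- by move=> g; apply: ancestor_of_ancestor.
- by move=> m' _; rewrite -cover_m => /lt_cover.
- by move=> m' _; rewrite -cover_m => /lt_cover.
- move=> m' am' lt_m'b; exact: IH.
Qed.

Lemma code_inj : a = a'.
Proof.
apply: (node_eq (o := None)) => //.
- by move=> g; split=> [ag|[]//]; split=> //; apply: ancestor_lt.
- by move=> g; split=> [ag|[]//]; split=> //; apply: ancestor_lt.
- by move=> m /ancestor_cover /ancestor_lt.
- by move=> m /ancestor_cover /ancestor_lt.
- by move=> m am _; apply: cover_same_code.
Qed.

End SameCode.

End Coding.

End ErdosRadoTree.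

Lemma cantor (T : Type) (g : (T -> Prop) -> T) : ~ (forall X Y, g X = g Y -> X = Y).
Proof.
move=> g_inj; pose S t := exists X, g X = t /\ ~ X t.
have notS : ~ S (g S) by move=> SgS; case: (SgS) => X [/g_inj ->]; apply.
by apply: (notS); exists S; split.
Qed.

Definition ramsey_property (n : nat) : Prop :=
  forall (C W : Type) (ltW : W -> W -> Prop), strict_well_order ltW ->
  exists (L : Type) (ltL : L -> L -> Prop), strict_well_order ltL /\
    forall f : list L -> C, exists e : W -> L, strict_mono ltW ltL e /\
      exists c0 : C, forall s, length s = n -> increasing ltW s -> f (List.map e s) = c0.

Lemma ramsey_property0 : ramsey_property 0.
Proof.
move=> C W ltW ltW_wo; exists W, ltW; split=> // f; exists id; split=> //.
by exists (f nil) => -[].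
Qed.

(* The tree on [L := T -> Prop] must have a branch of type [M]: otherwise every node is
   determined by a code in [T], which would inject [T -> Prop] into [T]. *)
Lemma ramsey_property_succ n : ramsey_property n -> ramsey_property n.+1.
Proof.
move=> IH C W ltW ltW_wo; have [M [ltM [ltM_wo M_ramsey]]] := IH C W ltW ltW_wo.
pose T := ((M -> Prop) * (M -> M -> Prop) * (list (option M) -> C))%type.
have [lt lt_wo] := well_order_exists (T -> Prop).
exists (T -> Prop), lt; split=> // f.
have [a [e' [e'_mono e'_anc]]] : exists a (e' : M -> T -> Prop),
    strict_mono ltM lt e' /\ forall m, ancestor n lt_wo f a (e' m).
  apply: NNPP => no_branch.
  have covered a : exists r : M -> T -> Prop,
      forall b, ancestor n lt_wo f a b -> exists m, r m = b.
    have [branch_a|//] := branch_or_cover n lt_wo f ltM_wo a.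
    by case: no_branch; exists a.
  have [cover cover_onto] := @choice _ _ _ covered.
  by apply: (@cantor T (code n lt_wo f cover)) => x y; apply: code_inj.
have [e [e_mono [c0 e_hom]]] := M_ramsey (fun u => f (List.map e' u ++ [:: a])).
exists (fun w => e' (e w)); split=> [x y /e_mono /e'_mono //|].
exists c0 => s; elim/List.rev_ind: s => [|w s' _] //.
rewrite List.length_app /= => len_s /increasing_app [s'_inc _ s'_lt_w].
have s'n : length s' = n by lia.
have /ancestorE [_ agree_w] := e'_anc (e w).
rewrite List.map_app /= agree_w.
- by rewrite -(e_hom s') // List.map_map.
- by rewrite List.length_map.
- by apply: increasing_map s'_inc => x y /e_mono /e'_mono.
- move=> _ /List.in_map_iff [x [<- xs']]; split; last exact: e'_anc.
  by apply/e'_mono/e_mono/s'_lt_w => //; left.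
Qed.

Theorem ramsey_well_order n : ramsey_property n.
Proof. by elim: n => [|n]; [exact: ramsey_property0|exact: ramsey_property_succ]. Qed.

Local Open Scope ring_scope.

(** * Vectors in [Q^L] *)

Section Pushforward.
Variables (W L : Type) (e : W -> L).
Hypothesis e_inj : forall x y, e x = e y -> x = y.

Definition pushforward (g : W -> rat) (l : L) : rat :=
  if pselect (exists w, e w = l) is left ex then g (projT1 (cid ex)) else 0.

Lemma pushforward_e g w : pushforward g (e w) = g w.
Proof.
rewrite /pushforward; case: pselect => [ex|]; last by case; exists w.
by case: (cid ex) => w' /= /e_inj ->.
Qed.

Lemma pushforward_out g l : ~ (exists w, e w = l) -> pushforward g l = 0.
Proof. by rewrite /pushforward; case: pselect. Qed.

Lemma pushforward_add g1 g2 :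
  vadd (pushforward g1) (pushforward g2) = pushforward (fun w => g1 w + g2 w).
Proof.
apply: funext => l; rewrite /vadd.
have [[w <-]|out] := classic (exists w, e w = l); first by rewrite !pushforward_e.
by rewrite !pushforward_out ?addr0.
Qed.

Lemma pushforward_inj g g' : pushforward g = pushforward g' -> g = g'.
Proof. by move=> eq_g; apply: funext => w; rewrite -!(pushforward_e _ w) eq_g. Qed.

Lemma pushforward_supp g (s : list W) :
  (forall w, g w != 0 -> List.In w s) -> fin_supp (pushforward g).
Proof.
move=> supp_g; exists (List.map e s) => l.
have [[w <-]|out] := classic (exists w, e w = l); last by rewrite pushforward_out ?eqxx.
by rewrite pushforward_e => /supp_g; apply: List.in_map.
Qed.

End Pushforward.

Definition pattern24 (L : Type) (A B : list L) (l : L) : rat :=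
  if `[< List.In l A >] then 2 else if `[< List.In l B >] then 4 else 0.

Lemma pattern24_map (W L : Type) (e : W -> L) (A B : list W) :
  (forall x y, e x = e y -> x = y) ->
  pattern24 (List.map e A) (List.map e B) = pushforward e (pattern24 A B).
Proof.
move=> e_inj; apply: funext => l.
have in_map_e w s : List.In (e w) (List.map e s) = List.In w s.
  by apply: propext; split=> [/List.in_map_iff [x [/e_inj -> //]]|]; exact: List.in_map.
have [[w <-]|out] := classic (exists w, e w = l).
  by rewrite pushforward_e // /pattern24 !in_map_e.
have notin s : ~ List.In l (List.map e s).
  by move=> /List.in_map_iff [w [ew _]]; apply: out; exists w.
by rewrite pushforward_out // /pattern24 !asboolF //; apply: notin.
Qed.

Section Blocks.
Variable K : Type.

(* Coordinates: a head block [inl m], one middle block [inr (inl (a, m))] for each [a : K],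
   and a tail block [inr (inr m)], ordered in this way. *)
Definition index : Type := nat + (K * nat + nat).

Definition index_lt (ltK : K -> K -> Prop) : index -> index -> Prop :=
  sum_lt (fun m n : nat => (m < n)%coq_nat)
    (sum_lt (lex_lt ltK) (fun m n : nat => (m < n)%coq_nat)).

Definition head_block (len : nat) : list index := List.map inl (List.seq 0 len).
Definition mid_block (a : K) (len : nat) : list index :=
  List.map (fun m => inr (inl (a, m))) (List.seq 0 len).
Definition tail_block (start len : nat) : list index :=
  List.map (fun m => inr (inr m)) (List.seq start len).

Lemma length_head_block len : length (head_block len) = len.
Proof. by rewrite List.length_map List.length_seq. Qed.

Lemma length_mid_block a len : length (mid_block a len) = len.
Proof. by rewrite List.length_map List.length_seq. Qed.

Lemma length_tail_block start len : length (tail_block start len) = len.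
Proof. by rewrite List.length_map List.length_seq. Qed.

Lemma tail_block_split start len len' :
  tail_block start (len + len') = tail_block start len ++ tail_block (start + len) len'.
Proof. by rewrite /tail_block List.seq_app List.map_app. Qed.

Lemma in_head_block len w :
  List.In w (head_block len) = if w is inl m then (m < len)%N else False.
Proof.
apply: propext; rewrite List.in_map_iff; split=> [[m [<- /List.in_seq]] /=|]; first lia.
by case: w => // m lt_m; exists m; split=> //; apply/List.in_seq; lia.
Qed.

Lemma in_mid_block a len w :
  List.In w (mid_block a len) = if w is inr (inl (a', m)) then a' = a /\ (m < len)%N else False.
Proof.
apply: propext; rewrite List.in_map_iff.
split=> [[m [<- /List.in_seq]] /=|]; first by split=> //; lia.
by case: w => // -[] // [a' m] [-> lt_m]; exists m; split=> //; apply/List.in_seq; lia.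
Qed.

Lemma in_tail_block start len w :
  List.In w (tail_block start len) =
  if w is inr (inr m) then (start <= m < start + len)%N else False.
Proof.
apply: propext; rewrite List.in_map_iff; split=> [[m [<- /List.in_seq]] /=|]; first lia.
by case: w => // -[] // m lt_m; exists m; split=> //; apply/List.in_seq; lia.
Qed.

End Blocks.

Section BlockOrder.
Variables (K : Type) (ltK : K -> K -> Prop).
Local Notation lt := (index_lt ltK).

Lemma increasing_head_block len : increasing lt (head_block K len).
Proof. by apply: increasing_map (increasing_seq 0 len). Qed.

Lemma increasing_mid_block a len : increasing lt (mid_block a len).
Proof. by apply: increasing_map (increasing_seq 0 len) => m n lt_mn; right. Qed.

Lemma increasing_tail_block start len : increasing lt (tail_block K start len).
Proof. by apply: increasing_map (increasing_seq start len). Qed.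

Lemma increasing_blocks s0 a t len :
  increasing lt (head_block K s0 ++ mid_block a t ++ tail_block K 0 len).
Proof.
apply/increasing_app; split; first exact: increasing_head_block.
  apply/increasing_app; split; [exact: increasing_mid_block|exact: increasing_tail_block|].
  by move=> x y; rewrite in_mid_block in_tail_block; case: x => [|[[]|]] //; case: y => [|[|]].
move=> x y; rewrite in_head_block List.in_app_iff in_mid_block in_tail_block.
by case: x => [|[[]|]] //; case: y => [|[[]|]] // ? ? ? [].
Qed.

Lemma increasing_blocks_lt s0 a b t len : ltK a b ->
  increasing lt (head_block K s0 ++ mid_block a t ++ mid_block b t ++ tail_block K 0 len).
Proof.
move=> lt_ab; apply/increasing_app; split; first exact: increasing_head_block.
  apply/increasing_app; split; [exact: increasing_mid_block| |].
    apply/increasing_app; split; [exact: increasing_mid_block|exact: increasing_tail_block|].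
    by move=> x y; rewrite in_mid_block in_tail_block; case: x => [|[[]|]] //; case: y => [|[|]].
  move=> x y; rewrite in_mid_block List.in_app_iff in_mid_block in_tail_block.
  case: x => [//|[[a' m] [-> _]|//]].
  by case: y => [m' [[]|[]]|[[b' m'] [[-> _]|[]]|//]]; left.
move=> x y; rewrite in_head_block !List.in_app_iff !in_mid_block in_tail_block.
by case: x => [|[[]|]] //; case: y => [|[[]|]] // ? ? ? [|[]].
Qed.

End BlockOrder.

Section Vectors.
Variables (K : Type) (s0 t s1 : nat).

Definition xvec (a : K) (w : index K) : rat :=
  match w with
  | inl m => if (m < s0)%N then 1 else 0
  | inr (inl (a', m)) => if `[< a' = a /\ (m < t)%N >] then 2 else 0
  | inr (inr m) => if (m < s1)%N then 2 else 0
  end.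

Let in_app (T : Type) (x : T) s s' : List.In x (s ++ s') = (List.In x s \/ List.In x s').
Proof. exact/propext/List.in_app_iff. Qed.

Lemma xvec_add_self a :
  (fun w => xvec a w + xvec a w) =
  pattern24 (head_block K s0) (mid_block a t ++ tail_block K 0 s1) :> (index K -> rat).
Proof.
apply: funext => -[m|[[a' m]|m]];
  rewrite /pattern24 /= in_app in_head_block in_mid_block in_tail_block /=;
  by do ![case: asboolP => //= ? | case: ifP => //= ?]; intuition (try lia; try congruence).
Qed.

Lemma xvec_add_neq a b : a <> b ->
  (fun w => xvec a w + xvec b w) =
  pattern24 (head_block K s0 ++ mid_block a t ++ mid_block b t) (tail_block K 0 s1)
  :> (index K -> rat).
Proof.
move=> neq_ab; apply: funext => -[m|[[a' m]|m]];
  rewrite /pattern24 /= !in_app in_head_block !in_mid_block in_tail_block /=;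
  by do ![case: asboolP => //= ? | case: ifP => //= ?]; intuition (try lia; try congruence).
Qed.

Lemma xvec_supp a w :
  xvec a w != 0 -> List.In w (head_block K s0 ++ mid_block a t ++ tail_block K 0 s1).
Proof.
rewrite !in_app in_head_block in_mid_block in_tail_block.
case: w => [m|[[a' m]|m]] /=.
- by case: ifP => // lt_m _; left.
- by case: asboolP => // mid _; right; left.
- by case: ifP => // lt_m _; right; right.
Qed.

Lemma xvec_inj a b : (0 < t)%N -> xvec a = xvec b -> a = b.
Proof.
move=> t_gt0 /(congr1 (fun x => x (inr (inl (a, 0%N))))) /=.
by rewrite asboolT //; case: asboolP => [[]|].
Qed.

End Vectors.

Lemma pigeonhole_pair (k : nat) (col : nat -> 'I_k) :
  exists i j, (i < j <= k)%N /\ col i = col j.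
Proof.
pose f (x : 'I_k.+1) := col x.
have /injectivePn [x [y neq_xy eq_f]] : ~~ injectiveb f.
  by apply/injectiveP => /leq_card; rewrite !card_ord ltnn.
have := ltn_ord x; have := ltn_ord y; rewrite !ltnS.
case: (ltngtP x y) => [lt_xy le_yk _|lt_yx _ le_xk|/val_inj eq_xy].
- by exists x, y; rewrite lt_xy le_yk.
- by exists y, x; rewrite lt_yx le_xk.
by rewrite eq_xy eqxx in neq_xy.
Qed.
Section Colouring.
Variables (k : nat) (K : Type) (ltK : K -> K -> Prop) (ltK_wo : strict_well_order ltK).
Variables (L : Type) (c : (L -> rat) -> 'I_k) (e : index K -> L) (c0 : nat -> nat -> 'I_k).
Hypothesis e_inj : forall x y, e x = e y -> x = y.
Hypothesis e_hom : forall s, length s = (4 * k)%N -> increasing (index_lt ltK) s ->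
  (fun p q => c (pattern24 (List.firstn p (List.map e s))
                            (List.firstn q (List.skipn p (List.map e s))))) = c0.

Lemma colour_pattern24 A B P :
  length (A ++ B ++ P) = (4 * k)%N -> increasing (index_lt ltK) (A ++ B ++ P) ->
  c (pushforward e (pattern24 A B)) = c0 (length A) (length B).
Proof.
move=> len_s inc_s; rewrite -(e_hom len_s inc_s) -pattern24_map // !List.map_app /=.
rewrite -(List.length_map e A) -(List.length_map e B).
by rewrite firstn_length_app skipn_length_app firstn_length_app.
Qed.

Variables (s0 t s1 : nat).
Local Notation vec a := (pushforward e (xvec s0 t s1 a)).

Lemma colour_add_self a pad : (s0 + t + s1 + pad = 4 * k)%N ->
  c (vadd (vec a) (vec a)) = c0 s0 (t + s1).
Proof.
move=> len; rewrite (pushforward_add e_inj) xvec_add_self.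
have := increasing_blocks ltK s0 a t (s1 + pad).
rewrite tail_block_split add0n [mid_block _ _ ++ _]List.app_assoc => /colour_pattern24 ->.
  by rewrite List.length_app length_head_block length_mid_block length_tail_block.
by rewrite !List.length_app length_head_block length_mid_block !length_tail_block; lia.
Qed.

Lemma colour_add_lt a b pad : ltK a b -> (s0 + t + t + s1 + pad = 4 * k)%N ->
  c (vadd (vec a) (vec b)) = c0 (s0 + t + t) s1.
Proof.
move=> lt_ab len.
have neq_ab : a <> b by move=> eq_ab; move: lt_ab; rewrite eq_ab; apply: wo_irrefl.
rewrite (pushforward_add e_inj) xvec_add_neq //.
have := increasing_blocks_lt s0 t (s1 + pad) lt_ab.
rewrite tail_block_split add0n [mid_block a _ ++ _]List.app_assoc.
rewrite [head_block _ _ ++ _]List.app_assoc => /colour_pattern24 ->.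
  rewrite !List.length_app length_head_block !length_mid_block length_tail_block.
  by congr c0; lia.
by rewrite !List.length_app length_head_block !length_mid_block !length_tail_block; lia.
Qed.

Lemma colour_add pad_self pad_lt :
  (s0 + t + s1 + pad_self = 4 * k)%N -> (s0 + t + t + s1 + pad_lt = 4 * k)%N ->
  c0 s0 (t + s1) = c0 (s0 + t + t) s1 ->
  forall a b, c (vadd (vec a) (vec b)) = c0 s0 (t + s1).
Proof.
move=> len_self len_lt same_c0 a b.
have [lt_ab|[<-|lt_ba]] := wo_trichotomy ltK_wo a b.
- by rewrite same_c0 (colour_add_lt lt_ab len_lt).
- exact: colour_add_self len_self.
- have -> : vadd (vec a) (vec b) = vadd (vec b) (vec a) by apply: funext => l; apply: addrC.
  by rewrite same_c0 (colour_add_lt lt_ba len_lt).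
Qed.

End Colouring.

Theorem theorem3 (k : nat) (hk : (0 < k)%N) (K : Type) (hK : infinite_type K) :
  exists L : Type, infinite_type L /\
    forall c : (L -> rat) -> 'I_k,
      exists X : (L -> rat) -> Prop,
        (forall x, X x -> fin_supp x) /\ has_card K X /\
        exists i : 'I_k, forall x y, X x -> X y -> c (vadd x y) = i.
Proof.
have [ltK ltK_wo] := well_order_exists K.
have index_wo : strict_well_order (index_lt ltK).
  exact: sum_well_order nat_well_order (sum_well_order (lex_well_order ltK_wo) nat_well_order).
have [L [ltL [ltL_wo L_ramsey]]] := ramsey_well_order (4 * k) (nat -> nat -> 'I_k) index_wo.
exists L; split.
  have [e [e_mono _]] := L_ramsey (fun _ _ _ => Ordinal hk).
  by exists (fun m => e (inl m)) => m m' /(strict_mono_inj index_wo ltL_wo e_mono) [].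
move=> c.
have [e [e_mono [c0 e_hom]]] := L_ramsey
  (fun s p q => c (pattern24 (List.firstn p s) (List.firstn q (List.skipn p s)))).
have e_inj := strict_mono_inj index_wo ltL_wo e_mono.
have [i [j [/andP [lt_ij le_jk] c0_ij]]] :=
  pigeonhole_pair (fun x => c0 (2 * k - 2 * x) (2 * k + x))%N.
pose vec a := pushforward e (xvec (2 * k - 2 * j)%N (j - i)%N (2 * k + i)%N a).
exists (fun x => exists a, x = vec a); split; [|split].
- by move=> _ [a ->]; apply: (pushforward_supp e_inj); apply: xvec_supp.
- exists vec; split; [|split].
  + move=> a b /(pushforward_inj e_inj) eq_ab; apply: xvec_inj eq_ab; by rewrite subn_gt0.
  + by move=> a; exists a.
  + by move=> _ [a ->]; exists a.
- exists (c0 (2 * k - 2 * j) (2 * k + j))%N => _ _ [a ->] [b ->].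
  have -> : (2 * k + j = j - i + (2 * k + i))%N by lia.
  apply: (colour_add ltK_wo e_inj e_hom (pad_self := j) (pad_lt := i)); try lia.
  have [-> ->] : (j - i + (2 * k + i) = 2 * k + j /\
                   2 * k - 2 * j + (j - i) + (j - i) = 2 * k - 2 * i)%N by split; lia.
  by rewrite c0_ij.
Qed.
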